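(* Let $f_0,f_1\in \mathrm{PL}_0(\mathbf{I})$ satisfy $[f_1^{f_0},f_0f_1^{-1}]=1$ and $[f_0f_1^{-1},f_1^{f_0^2}]=1$. Let $A=(a,c)$ be an orbital of $f_0$ that is an up-bump, and suppose $(a,c)$ is not an orbital of $f_1$. Let $(b_1,d_1),(b_2,d_2),\dots,(b_n,d_n)$, with $n\ge1$, be all the orbitals of $f_1$ that meet $(a,c)$, in increasing order. Then: (i) $a<b_1$; (ii) there is a point $p<c$ such that $f_0|_{[p,c]}=f_1|_{[p,c]}$; (iii) $d_n=c$; (iv) if $p$ is the minimal point such that $f_0|_{[p,c]}=f_1|_{[p,c]}$, then $b_nf_0\ge p$; (v) $b_1f_0>b_n$.
   Context: $\mathrm{PL}_0(\mathbf{I})$ is the group of orientation-preserving piecewise-linear homeomorphisms of $[0,1]$ with finitely many points of non-differentiability. Functions act on the right: $tf=f(t)$, $fg=g\circ f$, $a^b=b^{-1}ab$, $[a,b]=aba^{-1}b^{-1}$. The orbitals of $f$ are the connected components (open intervals) of $\operatorname{Supp}(f)=\{x: xf\ne x\}$; an orbital $A$ is an up-bump if $xf>x$ for all $x\in A$. Orbitals are ordered by $A<B$ if every point of $A$ is less than every point of $B$. *)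

From Stdlib Require Import Reals Lra ClassicalEpsilon.
Open Scope R_scope.

(* Elements of PL_0(I) are represented as functions R -> R that are the
   identity outside [0,1]; equality of group elements is then equality
   of functions. Functions act on the right:  t(fg) = g(f(t)). *)

Definition affine_on (f : R -> R) (u v : R) : Prop :=
  exists m q : R, forall x, u <= x <= v -> f x = m * x + q.

Definition PL0 (f : R -> R) : Prop :=
  (forall x, x < 0 \/ 1 < x -> f x = x) /\
  f 0 = 0 /\ f 1 = 1 /\
  (forall x y, 0 <= x -> x < y -> y <= 1 -> f x < f y) /\
  exists (k : nat) (xs : nat -> R),
    xs 0%nat = 0 /\ xs k = 1 /\
    (forall i, (i < k)%nat -> xs i < xs (S i)) /\
    (forall i, (i < k)%nat -> affine_on f (xs i) (xs (S i))).

Definition rmul (f g : R -> R) : R -> R := fun t => g (f t).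

Definition inv (f : R -> R) : R -> R :=
  epsilon (inhabits (fun x : R => x))
    (fun g : R -> R => (forall x, g (f x) = x) /\ (forall x, f (g x) = x)).

Definition conjg (a b : R -> R) : R -> R := rmul (rmul (inv b) a) b.

Definition comm (a b : R -> R) : R -> R :=
  rmul (rmul (rmul a b) (inv a)) (inv b).

Definition idf : R -> R := fun x => x.

Definition supp (f : R -> R) (x : R) : Prop := f x <> x.

(* (a,c) is an orbital: a connected component of Supp f, i.e. an open
   interval contained in Supp f whose endpoints are not in Supp f *)
Definition orbital (f : R -> R) (a c : R) : Prop :=
  a < c /\ (forall x, a < x < c -> supp f x) /\ ~ supp f a /\ ~ supp f c.

Definition up_bump (f : R -> R) (a c : R) : Prop :=
  orbital f a c /\ forall x, a < x < c -> x < f x.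

Definition agree_on (f g : R -> R) (p c : R) : Prop :=
  forall x, p <= x <= c -> f x = g x.

(* Write [g = f0 f1^-1] and [H_N = f1^(f0^N)].  Conjugating the two hypotheses
   by powers of [f0] shows that [g] commutes with every [H_N], [N >= 1].  The
   fixed points of a PL map are controlled by its finitely many breakpoints, so
   a map commuting with a PL map [Y] fixes each fixed point of [Y] next to which
   [Y] moves points: otherwise it would push a fundamental domain containing
   moved points of [Y] through infinitely many disjoint intervals.  For [Y = H_N]
   this makes [g] fix [e f0^N] for every endpoint [e] of an orbital of [f1]; for
   [Y = g] it makes [f1] fix [e f0^-N] for every endpoint [e] of an orbital of
   [g].  As forward [f0]-orbits in (a,c) tend to [c] and backward ones to [a],
   these constraints force the claimed configuration of orbitals.  The case
   [b_1 <= a] needs one more idea: then (b_1,d_1) is also an orbital of [g],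
   [f1^f0] and [f1^(f0^2)] agree on it (they have the same germ at [b_1], and
   the agreement set is [g]-invariant), so [f0] and [f1] commute there, and
   [f1] would have to fix [a] or [c]. *)

From Stdlib Require Import Reals Lra Lia ClassicalEpsilon Classical FunctionalExtensionality.
Open Scope R_scope.

Definition isinv (F G : R -> R) := (forall x, G (F x) = x) /\ (forall x, F (G x) = x).

Definition increasing (F : R -> R) := forall x y, x < y -> F x < F y.

Lemma increasing_le (F : R -> R) : increasing F -> forall x y, x <= y -> F x <= F y.
Proof. intros HF x y [Hlt|<-]; [left; auto|lra]. Qed.

Lemma increasing_reflect (F : R -> R) : increasing F -> forall x y, F x < F y -> x < y.
Proof.
  intros HF x y H. destruct (Rlt_or_le x y) as [|Hle]; auto.
  apply (increasing_le F HF) in Hle. lra.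
Qed.

Lemma increasing_iter (F : R -> R) : increasing F -> forall N, increasing (Nat.iter N F).
Proof. intros HF N. induction N; intros x y Hxy; simpl; auto. Qed.

Lemma isinv_sym (F G : R -> R) : isinv F G -> isinv G F.
Proof. intros [H1 H2]. split; auto. Qed.

Lemma isinv_increasing (F G : R -> R) : isinv F G -> increasing F -> increasing G.
Proof.
  intros [H1 H2] HF x y Hxy. apply (increasing_reflect F HF). now rewrite !H2.
Qed.

Lemma isinv_iter (F G : R -> R) : isinv F G -> forall N, isinv (Nat.iter N F) (Nat.iter N G).
Proof.
  intros [H1 H2] N. induction N as [|N [IH1 IH2]]; split; intros x; auto.
  - rewrite Nat.iter_succ_r. simpl. now rewrite H1.
  - rewrite Nat.iter_succ_r. simpl. now rewrite H2.
Qed.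

Lemma iter_fixed (F : R -> R) (x : R) : F x = x -> forall N, Nat.iter N F x = x.
Proof. intros Hx N. induction N; simpl; auto. now rewrite IHN. Qed.

Lemma cv_le_upper_bound (t : nat -> R) (L z : R) :
  Un_cv t L -> (forall j, t j <= z) -> L <= z.
Proof.
  intros Ht Hz. destruct (Rle_or_lt L z) as [|Hlt]; auto.
  destruct (Ht (L - z)) as [N HN]; [lra|].
  specialize (HN N (le_n N)). specialize (Hz N). unfold R_dist in HN.
  rewrite Rabs_left1 in HN; lra.
Qed.

Lemma cv_ge_lower_bound (t : nat -> R) (L z : R) :
  Un_cv t L -> (forall j, z <= t j) -> z <= L.
Proof.
  intros Ht Hz. destruct (Rle_or_lt z L) as [|Hlt]; auto.
  destruct (Ht (z - L)) as [N HN]; [lra|].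
  specialize (HN N (le_n N)). specialize (Hz N). unfold R_dist in HN.
  rewrite Rabs_right in HN; lra.
Qed.

Lemma cv_shift_eq (t : nat -> R) (L : R) (P Q : R -> R) :
  Un_cv t L -> continuity_pt P L -> continuity_pt Q L ->
  (forall j, P (t j) = Q (t (S j))) -> P L = Q L.
Proof.
  intros Ht HP HQ Hrel.
  apply (UL_sequence (fun j => P (t j))).
  - exact (continuity_seq P t L HP Ht).
  - apply (Un_cv_ext (fun j => Q (t (j + 1)%nat))).
    + intros j. rewrite Nat.add_1_r. symmetry. apply Hrel.
    + apply (continuity_seq Q (fun j => t (j + 1)%nat)); auto. now apply CV_shift'.
Qed.

Lemma increasing_bounded_shift_eq (t : nat -> R) (z : R) (P Q : R -> R) :
  (forall j, t j <= t (S j)) -> (forall j, t j <= z) ->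
  (forall x, continuity_pt P x) -> (forall x, continuity_pt Q x) ->
  (forall j, P (t j) = Q (t (S j))) ->
  exists L, t O <= L <= z /\ P L = Q L.
Proof.
  intros Hinc Hz HP HQ Hrel.
  destruct (growing_cv t Hinc) as [L HL].
  { exists z. intros y [j ->]. apply Hz. }
  exists L. repeat split.
  - exact (growing_ineq t L Hinc HL O).
  - exact (cv_le_upper_bound t L z HL Hz).
  - exact (cv_shift_eq t L P Q HL (HP L) (HQ L) Hrel).
Qed.

Lemma decreasing_bounded_shift_eq (t : nat -> R) (z : R) (P Q : R -> R) :
  (forall j, t (S j) <= t j) -> (forall j, z <= t j) ->
  (forall x, continuity_pt P x) -> (forall x, continuity_pt Q x) ->
  (forall j, P (t j) = Q (t (S j))) ->
  exists L, z <= L <= t O /\ P L = Q L.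
Proof.
  intros Hdec Hz HP HQ Hrel.
  destruct (decreasing_cv t Hdec) as [L HL].
  { exists (- z). intros y [j ->]. unfold opp_seq. specialize (Hz j). lra. }
  exists L. repeat split.
  - exact (cv_ge_lower_bound t L z HL Hz).
  - exact (decreasing_ineq t L Hdec HL O).
  - exact (cv_shift_eq t L P Q HL (HP L) (HQ L) Hrel).
Qed.

Lemma descending_orbit_approaches (s P Q : R -> R) (b x e : R) :
  increasing s -> s b = b -> b < x -> s x < x -> 0 < e ->
  (forall z, continuity_pt P z) -> (forall z, continuity_pt Q z) ->
  (forall j, P (Nat.iter j s x) = Q (Nat.iter (S j) s x)) ->
  (forall z, b < z <= x -> P z <> Q z) ->
  exists j, b < Nat.iter j s x < b + e.
Proof.
  intros Hs Hb Hbx Hsx He HP HQ Hrel Hne.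
  assert (Habove : forall j, b < Nat.iter j s x).
  { induction j; simpl; auto. rewrite <- Hb. now apply Hs. }
  assert (Hdec : forall j, Nat.iter (S j) s x < Nat.iter j s x).
  { induction j; simpl in *; auto. }
  apply NNPP. intros Hno.
  destruct (decreasing_bounded_shift_eq (fun j => Nat.iter j s x) (b + e) P Q)
    as [L [HL HPQ]]; auto.
  - intros j. left. apply Hdec.
  - intros j. apply Rnot_lt_le. intros Hj. apply Hno. exists j. split; auto.
  - apply (Hne L); auto. simpl in HL. lra.
Qed.

Lemma continuous_zero_of_adherent (phi : R -> R) (u : R) : continuity_pt phi u ->
  (forall e, 0 < e -> exists z, Rabs (z - u) < e /\ phi z = 0) -> phi u = 0.
Proof.
  intros Hc Hadh. apply NNPP. intros Hu.
  destruct (continuous_neq_0 phi u Hc Hu) as [[e He] Hne].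
  destruct (Hadh e He) as [z [Hz Hz0]].
  apply (Hne (z - u) Hz). now replace (u + (z - u)) with z by ring.
Qed.

Lemma last_zero_before (phi : R -> R) (y0 x : R) : (forall z, continuity_pt phi z) ->
  y0 < x -> phi y0 = 0 -> phi x <> 0 ->
  exists u, y0 <= u < x /\ phi u = 0 /\ forall z, u < z <= x -> phi z <> 0.
Proof.
  intros Hc Hyx H0 Hx.
  set (E := fun z => y0 <= z <= x /\ phi z = 0).
  destruct (completeness E) as [u [Hub Hlub]].
  { exists x. intros z [Hz _]. lra. }
  { exists y0. split; auto; lra. }
  assert (Hy0u : y0 <= u) by (apply Hub; split; auto; lra).
  assert (Hux : u <= x) by (apply Hlub; intros z [Hz _]; lra).
  assert (Hu0 : phi u = 0).
  { apply continuous_zero_of_adherent; auto. intros e He.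
    apply NNPP. intros Hno. assert (u <= u - e); [|lra].
    apply Hlub. intros z Hz. apply Rnot_lt_le. intros Hlt. apply Hno.
    exists z. destruct Hz as [Hz Hz0]. split; auto.
    assert (z <= u) by (apply Hub; split; auto). rewrite Rabs_left1; lra. }
  exists u. repeat split; auto.
  - destruct (Req_dec u x) as [->|]; [contradiction|lra].
  - intros z Hz Hz0. assert (z <= u) by (apply Hub; split; auto; lra). lra.
Qed.

Lemma first_zero_after (phi : R -> R) (y0 x : R) : (forall z, continuity_pt phi z) ->
  x < y0 -> phi y0 = 0 -> phi x <> 0 ->
  exists w, x < w <= y0 /\ phi w = 0 /\ forall z, x <= z < w -> phi z <> 0.
Proof.
  intros Hc Hxy H0 Hx.
  destruct (last_zero_before (fun y => phi (- y)) (- y0) (- x)) as [u [Hu [Hu0 Hne]]].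
  - intros z. apply (continuity_pt_comp Ropp phi); [reg|apply Hc].
  - lra.
  - now rewrite Ropp_involutive.
  - now rewrite Ropp_involutive.
  - exists (- u). repeat split; try lra; auto.
    intros z Hz. rewrite <- (Ropp_involutive z). apply Hne. lra.
Qed.

Lemma zero_on_interval_ends (phi : R -> R) (a c : R) :
  continuity_pt phi a -> continuity_pt phi c -> a < c ->
  (forall x, a < x < c -> phi x = 0) -> phi a = 0 /\ phi c = 0.
Proof.
  intros Ha Hc Hac H0. split; apply continuous_zero_of_adherent; auto; intros e He;
    set (s := Rmin e (c - a) / 2);
    assert (0 < Rmin e (c - a)) by (apply Rmin_glb_lt; lra);
    assert (Rmin e (c - a) <= e) by apply Rmin_l;
    assert (Rmin e (c - a) <= c - a) by apply Rmin_r.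
  - exists (a + s). unfold s. rewrite H0 by lra. split; auto. rewrite Rabs_right; lra.
  - exists (c - s). unfold s. rewrite H0 by lra. split; auto. rewrite Rabs_left; lra.
Qed.

Lemma zero_free_interval_around (phi : R -> R) (y0 y1 x : R) :
  (forall z, continuity_pt phi z) -> y0 < x < y1 -> phi y0 = 0 -> phi y1 = 0 -> phi x <> 0 ->
  exists u w, y0 <= u < x /\ x < w <= y1 /\ phi u = 0 /\ phi w = 0 /\
    forall z, u < z < w -> phi z <> 0.
Proof.
  intros Hc Hx H0 H1 Hx0.
  destruct (last_zero_before phi y0 x Hc ltac:(lra) H0 Hx0) as [u [Hu [Hu0 Hul]]].
  destruct (first_zero_after phi y1 x Hc ltac:(lra) H1 Hx0) as [w [Hw [Hw0 Hwr]]].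
  exists u, w. repeat split; auto; try lra.
  intros z Hz. destruct (Rle_or_lt z x); [apply Hul|apply Hwr]; lra.
Qed.

(* [tame Y]: the fixed points of [Y] are controlled by finitely many points
   [B 0, ..., B K], e.g. the breakpoints of a PL map. *)
Definition tame (Y : R -> R) := exists (B : nat -> R) (K : nat),
  forall u v, u < v -> Y u = u -> Y v = v ->
  (forall i, (i <= K)%nat -> ~ (u < B i < v)) -> forall x, u <= x <= v -> Y x = x.

Fixpoint count_below (B : nat -> R) (z : R) (m : nat) : nat :=
  match m with
  | O => O
  | S m' => (count_below B z m' + (if Rlt_dec (B m') z then 1 else 0))%nat
  end.

Lemma count_below_le (B : nat -> R) (z : R) (m : nat) : (count_below B z m <= m)%nat.
Proof. induction m; simpl; [lia|]. destruct (Rlt_dec (B m) z); lia. Qed.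

Lemma count_below_mono (B : nat -> R) (z1 z2 : R) (m : nat) :
  z1 <= z2 -> (count_below B z1 m <= count_below B z2 m)%nat.
Proof.
  intros H. induction m; simpl; [lia|].
  destruct (Rlt_dec (B m) z1), (Rlt_dec (B m) z2); lra || lia.
Qed.

Lemma count_below_strict (B : nat -> R) (z1 z2 : R) (m i : nat) :
  z1 <= B i < z2 -> (i < m)%nat -> (count_below B z1 m < count_below B z2 m)%nat.
Proof.
  intros Hz Hi. induction m; simpl; [lia|].
  pose proof (count_below_mono B z1 z2 m ltac:(lra)).
  destruct (Nat.eq_dec i m) as [->|Hne].
  - destruct (Rlt_dec (B m) z1), (Rlt_dec (B m) z2); lra || lia.
  - specialize (IHm ltac:(lia)).
    destruct (Rlt_dec (B m) z1), (Rlt_dec (B m) z2); lra || lia.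
Qed.

Lemma tame_no_wandering_chain (Y : R -> R) (t : nat -> R) : tame Y ->
  (forall j, t j < t (S j)) -> (forall j, Y (t j) = t j) ->
  ~ (forall j, exists x, t j < x < t (S j) /\ Y x <> x).
Proof.
  intros [B [K HT]] Hinc Hfix Hmov.
  assert (Hbreak : forall j, exists i, (i <= K)%nat /\ t j < B i < t (S j)).
  { intros j. apply NNPP. intros Hno. destruct (Hmov j) as [x [Hx Hy]]. apply Hy.
    apply (HT (t j) (t (S j))); auto; try lra.
    intros i Hi Hb. apply Hno. now exists i. }
  assert (Hcount : forall j, (j <= count_below B (t j) (S K))%nat).
  { induction j; [lia|]. destruct (Hbreak j) as [i [Hi Hb]].
    pose proof (count_below_strict B (t j) (t (S j)) (S K) i ltac:(lra) ltac:(lia)). lia. }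
  specialize (Hcount (S (S K))). pose proof (count_below_le B (t (S (S K))) (S K)). lia.
Qed.

(* The images of the fundamental domain (e, s e) under the powers of [s] are
   disjoint, and [Y] moves a point in each of them. *)
Lemma tame_fixes_fundamental_domain (s Y : R -> R) (S : R -> Prop) (e x : R) :
  increasing s -> (forall x, S x -> S (s x)) ->
  (forall x, S x -> Y (s x) = s (Y x)) ->
  tame Y -> S e -> Y e = e -> e < s e ->
  e < x < s e -> S x -> Y x = x.
Proof.
  intros Hs HS Hc HT Se He Hlt Hx Sx. apply NNPP. intros Hmov.
  assert (IS : forall N x, S x -> S (Nat.iter N s x)) by (induction N; simpl; auto).
  assert (Ic : forall N x, S x -> Y (Nat.iter N s x) = Nat.iter N s (Y x)).
  { induction N; simpl; intros; auto. rewrite Hc by auto. now rewrite IHN. }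
  apply (tame_no_wandering_chain Y (fun j => Nat.iter j s e) HT).
  - intros j. rewrite Nat.iter_succ_r. now apply increasing_iter.
  - intros j. now rewrite Ic, He.
  - intros j. exists (Nat.iter j s x). split; [split|].
    + apply increasing_iter; auto; lra.
    + rewrite Nat.iter_succ_r. apply increasing_iter; auto; lra.
    + rewrite Ic by auto. intros E. apply Hmov.
      destruct (Rtotal_order (Y x) x) as [L|[L|L]]; auto;
        apply (increasing_iter s Hs j) in L; lra.
Qed.

Definition moved_near (Y : R -> R) (S : R -> Prop) (e : R) :=
  (exists r, 0 < r /\ forall x, e < x < e + r -> S x /\ Y x <> x) \/
  (exists r, 0 < r /\ forall x, e - r < x < e -> S x /\ Y x <> x).

Lemma tame_commuting_no_right_push (s si Y : R -> R) (S : R -> Prop) (e : R) :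
  isinv s si -> increasing s ->
  (forall x, S x -> S (s x)) -> (forall x, S x -> S (si x)) ->
  (forall x, S x -> Y (s x) = s (Y x)) ->
  tame Y -> S e -> Y e = e -> moved_near Y S e -> ~ e < s e.
Proof.
  intros [K1 K2] Hs HS HSi Hc HT Se He Hmov Hlt.
  assert (Hsi := isinv_increasing s si (conj K1 K2) Hs).
  destruct Hmov as [[r [Hr Hx]]|[r [Hr Hx]]].
  - set (m := Rmin (e + r) (s e)).
    assert (e < m) by (apply Rmin_glb_lt; lra).
    assert (m <= e + r) by apply Rmin_l. assert (m <= s e) by apply Rmin_r.
    destruct (Hx ((e + m) / 2)) as [Sx Yx]; [lra|].
    apply Yx, (tame_fixes_fundamental_domain s Y S e); auto. lra.
  - assert (Hsie : si e < e) by (rewrite <- (K1 e) at 2; now apply Hsi).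
    set (m := Rmax (e - r) (si e)).
    assert (m < e) by (apply Rmax_lub_lt; lra).
    assert (e - r <= m) by apply Rmax_l. assert (si e <= m) by apply Rmax_r.
    set (x := (e + m) / 2).
    destruct (Hx x) as [Sx Yx]; [unfold x; lra|].
    assert (Hsx : Y (s x) = s x).
    { apply (tame_fixes_fundamental_domain s Y S e); auto.
      split; [rewrite <- (K2 e) at 1|]; apply Hs; unfold x; lra. }
    apply Yx. now rewrite <- (K1 (Y x)), <- Hc, Hsx, K1 by auto.
Qed.

Lemma tame_commuting_fixes (X Xi Y : R -> R) (S : R -> Prop) (e : R) :
  isinv X Xi -> increasing X ->
  (forall x, S x -> S (X x)) -> (forall x, S x -> S (Xi x)) ->
  (forall x, S x -> Y (X x) = X (Y x)) ->
  tame Y -> S e -> Y e = e -> moved_near Y S e -> X e = e.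
Proof.
  intros HX Hm HS HSi Hc HT Se He Hmov.
  destruct (Rtotal_order (X e) e) as [L|[L|L]]; auto; exfalso.
  - assert (Hci : forall x, S x -> Y (Xi x) = Xi (Y x)).
    { intros x Sx. rewrite <- (proj1 HX (Y (Xi x))), <- Hc, (proj2 HX) by auto. easy. }
    apply (tame_commuting_no_right_push Xi X Y S e (isinv_sym X Xi HX)
             (isinv_increasing X Xi HX Hm) HSi HS Hci HT Se He Hmov).
    rewrite <- (proj1 HX e) at 1. now apply (isinv_increasing X Xi HX Hm).
  - exact (tame_commuting_no_right_push X Xi Y S e HX Hm HS HSi Hc HT Se He Hmov L).
Qed.

Lemma moved_near_conj (Y P Pi : R -> R) (e : R) : isinv P Pi -> increasing P ->
  moved_near Y (fun _ => True) e -> moved_near (fun x => P (Y (Pi x))) (fun _ => True) (P e).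
Proof.
  intros [H1 H2] Hm Hmov.
  assert (Hmi := isinv_increasing P Pi (conj H1 H2) Hm).
  assert (Hfix : forall x, P (Y (Pi x)) = x -> Y (Pi x) = Pi x).
  { intros x Hx. rewrite <- Hx at 2. now rewrite H1. }
  destruct Hmov as [[r [Hr Hx]]|[r [Hr Hx]]].
  - left. exists (P (e + r) - P e). split; [pose proof (Hm e (e + r)); lra|].
    intros x Hxr. split; auto. intros E. apply (Hx (Pi x)); auto.
    split; [rewrite <- (H1 e)|rewrite <- (H1 (e + r))]; apply Hmi; lra.
  - right. exists (P e - P (e - r)). split; [pose proof (Hm (e - r) e); lra|].
    intros x Hxr. split; auto. intros E. apply (Hx (Pi x)); auto.
    split; [rewrite <- (H1 (e - r))|rewrite <- (H1 e)]; apply Hmi; lra.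
Qed.

Lemma PL0_id_outside (f : R -> R) : PL0 f -> forall x, x <= 0 \/ 1 <= x -> f x = x.
Proof.
  intros [Hout [H0 [H1 _]]] x [Hx|Hx].
  - destruct (Req_dec x 0) as [->|]; auto. apply Hout; lra.
  - destruct (Req_dec x 1) as [->|]; auto. apply Hout; lra.
Qed.

Lemma PL0_increasing (f : R -> R) : PL0 f -> increasing f.
Proof.
  intros Hf x y Hxy. pose proof (PL0_id_outside f Hf) as Hid.
  destruct Hf as [_ [H0 [H1 [Hm _]]]].
  assert (Hrange : forall z, 0 <= z <= 1 -> 0 <= f z <= 1).
  { intros z Hz. split.
    - destruct (Req_dec z 0) as [->|]; [lra|]. pose proof (Hm 0 z). lra.
    - destruct (Req_dec z 1) as [->|]; [lra|]. pose proof (Hm z 1). lra. }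
  destruct (Rle_or_lt 0 x) as [Hx0|Hx0]; destruct (Rle_or_lt y 1) as [Hy1|Hy1].
  - apply Hm; lra.
  - rewrite (Hid y) by lra. destruct (Rle_or_lt x 1).
    + pose proof (Hrange x). lra.
    + rewrite (Hid x) by lra. lra.
  - rewrite (Hid x) by lra. destruct (Rle_or_lt 0 y).
    + pose proof (Hrange y). lra.
    + rewrite (Hid y) by lra. lra.
  - rewrite (Hid x), (Hid y) by lra. lra.
Qed.

Lemma first_segment_containing (xs : nat -> R) (k : nat) :
  (forall i, (i < k)%nat -> xs i < xs (S i)) ->
  forall m, (m <= k)%nat -> forall u, xs O <= u < xs m ->
  exists i, (i < m)%nat /\ xs i <= u < xs (S i).
Proof.
  intros Hinc m. induction m; intros Hm u Hu; [lra|].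
  destruct (Rlt_or_le u (xs m)).
  - destruct (IHm ltac:(lia) u) as [i [Hi Hi2]]; [lra|]. exists i; split; auto; lia.
  - exists m; split; auto; lra.
Qed.

Lemma PL0_affine_between_breaks (f : R -> R) : PL0 f -> exists (xs : nat -> R) (k : nat),
  forall u v, u < v -> (forall i, (i <= k)%nat -> ~ (u < xs i < v)) -> affine_on f u v.
Proof.
  intros Hf. pose proof (PL0_id_outside f Hf) as Hid.
  destruct Hf as [_ [_ [_ [_ [k [xs [Hx0 [Hxk [Hinc Haff]]]]]]]]].
  assert (Hidaff : forall u v, (v <= 0 \/ 1 <= u) -> affine_on f u v).
  { intros u v Huv. exists 1, 0. intros x Hx. rewrite Hid by lra. ring. }
  exists xs, k. intros u v Huv Hnb.
  destruct (Rle_or_lt v 0); [apply Hidaff; lra|].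
  destruct (Rle_or_lt 1 u); [apply Hidaff; lra|].
  destruct (Rlt_or_le u 0). { exfalso. apply (Hnb O); [lia|lra]. }
  destruct (Rlt_or_le 1 v). { exfalso. apply (Hnb k); [lia|lra]. }
  destruct (first_segment_containing xs k Hinc k (le_n k) u) as [i [Hi Hu]]; [lra|].
  destruct (Rlt_or_le (xs (S i)) v). { exfalso. apply (Hnb (S i)); [lia|lra]. }
  destruct (Haff i Hi) as [m [q Hmq]]. exists m, q. intros x Hx. apply Hmq. lra.
Qed.

Lemma finite_avoided_right (B : nat -> R) (m : nat) (x : R) :
  exists e, 0 < e /\ forall i, (i <= m)%nat -> ~ (x < B i < x + e).
Proof.
  induction m as [|m [e [He Hn]]].
  - destruct (Rlt_or_le x (B O)).
    + exists (B O - x). split; [lra|]. intros i Hi. replace i with O by lia. lra.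
    + exists 1. split; [lra|]. intros i Hi. replace i with O by lia. lra.
  - destruct (Rlt_or_le x (B (S m))).
    + exists (Rmin e (B (S m) - x)). split; [apply Rmin_glb_lt; lra|].
      assert (Rmin e (B (S m) - x) <= e) by apply Rmin_l.
      assert (Rmin e (B (S m) - x) <= B (S m) - x) by apply Rmin_r.
      intros i Hi. destruct (Nat.eq_dec i (S m)) as [->|]; [lra|].
      intros Hc. apply (Hn i); [lia|lra].
    + exists e. split; auto. intros i Hi.
      destruct (Nat.eq_dec i (S m)) as [->|]; [lra|]. apply Hn. lia.
Qed.

Lemma finite_avoided_left (B : nat -> R) (m : nat) (x : R) :
  exists e, 0 < e /\ forall i, (i <= m)%nat -> ~ (x - e < B i < x).
Proof.
  destruct (finite_avoided_right (fun i => - B i) m (- x)) as [e [He Hn]].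
  exists e. split; auto. intros i Hi Hc. apply (Hn i Hi). lra.
Qed.

Lemma PL0_affine_right (f : R -> R) : PL0 f -> forall x, exists e, 0 < e /\ affine_on f x (x + e).
Proof.
  intros Hf x. destruct (PL0_affine_between_breaks f Hf) as [xs [k Ha]].
  destruct (finite_avoided_right xs k x) as [e [He Hn]].
  exists e. split; auto. apply Ha; auto; lra.
Qed.

Lemma PL0_affine_left (f : R -> R) : PL0 f -> forall x, exists e, 0 < e /\ affine_on f (x - e) x.
Proof.
  intros Hf x. destruct (PL0_affine_between_breaks f Hf) as [xs [k Ha]].
  destruct (finite_avoided_left xs k x) as [e [He Hn]].
  exists e. split; auto. apply Ha; auto; lra.
Qed.

(* Near [x], [f] is the kink function with the left and right slopes of [f] at [x]. *)
Lemma PL0_continuous (f : R -> R) : PL0 f -> forall x, continuity_pt f x.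
Proof.
  intros Hf x.
  destruct (PL0_affine_left f Hf x) as [e1 [He1 [m1 [q1 H1]]]].
  destruct (PL0_affine_right f Hf x) as [e2 [He2 [m2 [q2 H2]]]].
  apply (continuity_pt_locally_ext
    (fun y => f x + m1 * ((y - x) - Rabs (y - x)) / 2 + m2 * ((y - x) + Rabs (y - x)) / 2)
    f (Rmin e1 e2)).
  - now apply Rmin_glb_lt.
  - intros y Hy. unfold Rdist in Hy.
    assert (Rmin e1 e2 <= e1) by apply Rmin_l. assert (Rmin e1 e2 <= e2) by apply Rmin_r.
    destruct (Rle_or_lt y x).
    + rewrite Rabs_left1 in * by lra. rewrite (H1 y), (H1 x) by lra. field.
    + rewrite Rabs_right in * by lra. rewrite (H2 y), (H2 x) by lra. field.
  - reg.
Qed.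

Lemma PL0_surjective (f : R -> R) : PL0 f -> forall y, exists x, f x = y.
Proof.
  intros Hf y. pose proof (PL0_id_outside f Hf) as Hid.
  destruct (Rle_or_lt y 0). { exists y. apply Hid. auto. }
  destruct (Rle_or_lt 1 y). { exists y. apply Hid. auto. }
  destruct (IVT (fun x => f x - y) 0 1) as [x [_ Hx]].
  - intros x. apply continuity_pt_minus; [now apply PL0_continuous|reg].
  - lra.
  - rewrite Hid by lra. lra.
  - rewrite Hid by lra. lra.
  - exists x. lra.
Qed.

Lemma inv_spec (F G : R -> R) : isinv F G -> isinv F (inv F).
Proof.
  intros H. unfold inv. apply (epsilon_spec (inhabits (fun x : R => x))
    (fun g : R -> R => (forall x, g (F x) = x) /\ (forall x, F (g x) = x))).
  now exists G.
Qed.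

Lemma inv_unique (F G : R -> R) : isinv F G -> forall x, inv F x = G x.
Proof.
  intros HG x. destruct (inv_spec F G HG) as [_ HI].
  rewrite <- (HI x) at 2. now rewrite (proj1 HG).
Qed.

Lemma PL0_isinv (f : R -> R) : PL0 f -> isinv f (inv f).
Proof.
  intros Hf. destruct (choice (fun y x => f x = y) (PL0_surjective f Hf)) as [g Hg].
  apply (inv_spec f g). split; intros x; auto.
  destruct (Rtotal_order (g (f x)) x) as [L|[L|L]]; auto;
    apply (PL0_increasing f Hf) in L; rewrite Hg in L; lra.
Qed.

Lemma affine_on_sub (F : R -> R) (u v u' v' : R) :
  affine_on F u v -> u <= u' -> v' <= v -> affine_on F u' v'.
Proof. intros [m [q H]] Hu Hv. exists m, q. intros x Hx. apply H. lra. Qed.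

Lemma affine_agree (F G : R -> R) (u v y1 y2 : R) :
  affine_on F u v -> affine_on G u v -> u <= y1 < y2 -> y2 <= v ->
  F y1 = G y1 -> F y2 = G y2 -> forall x, u <= x <= v -> F x = G x.
Proof.
  intros [m1 [q1 H1]] [m2 [q2 H2]] Hy1 Hy2 E1 E2 x Hx.
  rewrite H1, H2 in E1, E2 by lra. rewrite H1, H2 by lra.
  assert (m1 = m2) by (apply Rmult_eq_reg_r with (y2 - y1); nra).
  subst. assert (q1 = q2) by lra. now subst.
Qed.

Lemma affine_fixing_two_points (F : R -> R) (u v : R) :
  affine_on F u v -> u < v -> F u = u -> F v = v -> forall x, u <= x <= v -> F x = x.
Proof.
  intros HF Huv Hu Hv.
  apply (affine_agree F (fun x => x) u v u v); auto; try lra.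
  exists 1, 0. intros. ring.
Qed.

Lemma PL0_tame (f : R -> R) : PL0 f -> tame f.
Proof.
  intros Hf. destruct (PL0_affine_between_breaks f Hf) as [xs [k Ha]].
  exists xs, k. intros u v Huv Hu Hv Hnb.
  exact (affine_fixing_two_points f u v (Ha u v Huv Hnb) Huv Hu Hv).
Qed.

(* The breakpoints of [F] followed by those of [G]. *)
Lemma tame_of_agreement (F G Y : R -> R) : PL0 F -> PL0 G ->
  (forall x, Y x = x <-> F x = G x) -> tame Y.
Proof.
  intros HF HG HY.
  destruct (PL0_affine_between_breaks F HF) as [xs [k Ha]].
  destruct (PL0_affine_between_breaks G HG) as [ys [l Hb]].
  exists (fun i => if Compare_dec.le_lt_dec i k then xs i else ys (i - S k)%nat), (k + S l)%nat.
  intros u v Huv Hu Hv Hnb x Hx. apply HY. apply HY in Hu, Hv.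
  apply (affine_agree F G u v u v); auto; try lra.
  - apply Ha; auto. intros i Hi. specialize (Hnb i ltac:(lia)).
    destruct (Compare_dec.le_lt_dec i k); auto; lia.
  - apply Hb; auto. intros i Hi. specialize (Hnb (i + S k)%nat ltac:(lia)).
    destruct (Compare_dec.le_lt_dec (i + S k) k); [lia|].
    now replace (i + S k - S k)%nat with i in Hnb by lia.
Qed.

Lemma tame_conj (Y P Pi : R -> R) : tame Y -> isinv P Pi -> increasing P ->
  tame (fun x => P (Y (Pi x))).
Proof.
  intros [B [K HT]] [H1 H2] Hm.
  assert (Hmi := isinv_increasing P Pi (conj H1 H2) Hm).
  exists (fun i => P (B i)), K. intros u v Huv Hu Hv Hnb x Hx.
  assert (Hfix : forall z, P (Y (Pi z)) = z -> Y (Pi z) = Pi z).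
  { intros z Hz. rewrite <- Hz at 2. now rewrite H1. }
  rewrite (HT (Pi u) (Pi v)); auto.
  - intros i Hi Hc. apply (Hnb i Hi).
    split; [rewrite <- (H2 u)|rewrite <- (H2 v)]; apply Hm; lra.
  - split; apply (increasing_le Pi Hmi); lra.
Qed.

Lemma PL0_id : PL0 (fun x => x).
Proof.
  repeat split; auto. exists 1%nat, INR. repeat split; try reflexivity.
  - intros i Hi. replace i with O by lia. simpl. lra.
  - intros i Hi. exists 1, 0. intros. ring.
Qed.

Lemma PL0_disagreement_interval (F G : R -> R) (x : R) : PL0 F -> PL0 G -> F x <> G x ->
  exists u w, u < x < w /\ F u = G u /\ F w = G w /\ forall z, u < z < w -> F z <> G z.
Proof.
  intros HF HG Hx.
  assert (Hfar : forall y, y <= 0 \/ 1 <= y -> F y - G y = 0).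
  { intros y Hy. rewrite (PL0_id_outside F HF y Hy), (PL0_id_outside G HG y Hy). ring. }
  destruct (zero_free_interval_around (fun y => F y - G y) (Rmin x 0 - 1) (Rmax x 1 + 1) x)
    as [u [w [Hu [Hw [Hu0 [Hw0 Hfree]]]]]].
  - intros z. apply continuity_pt_minus; now apply PL0_continuous.
  - split; [pose proof (Rmin_l x 0)|pose proof (Rmax_l x 1)]; lra.
  - apply Hfar. left. pose proof (Rmin_r x 0). lra.
  - apply Hfar. right. pose proof (Rmax_r x 1). lra.
  - lra.
  - exists u, w. repeat split; try lra.
    intros z Hz E. apply (Hfree z Hz). lra.
Qed.

Lemma orbital_spec (F : R -> R) (u w : R) : orbital F u w ->
  u < w /\ F u = u /\ F w = w /\ forall z, u < z < w -> F z <> z.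
Proof. intros [Huw [Hin [Hu Hw]]]. repeat split; auto; now apply NNPP. Qed.

Definition right_germ (F : R -> R) (b m : R) := 0 < m /\ exists e, 0 < e /\
  forall y, b <= y <= b + e -> F y = b + m * (y - b).

Lemma PL0_right_germ (f : R -> R) (b : R) : PL0 f -> f b = b -> exists m, right_germ f b m.
Proof.
  intros Hf Hb. destruct (PL0_affine_right f Hf b) as [e [He [m [q Hmq]]]].
  assert (Hq : q = b - m * b) by (rewrite Hmq in Hb by lra; lra).
  exists m. split.
  - pose proof (PL0_increasing f Hf b (b + e) ltac:(lra)) as Hlt.
    rewrite !Hmq in Hlt by lra. nra.
  - exists e. split; auto. intros y Hy. rewrite Hmq, Hq by lra. ring.
Qed.

Lemma right_germ_inv (F G : R -> R) (b m : R) :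
  right_germ F b m -> isinv F G -> right_germ G b (/ m).
Proof.
  intros [Hm [e [He HF]]] [I1 I2]. split; [now apply Rinv_0_lt_compat|].
  exists (m * e). split; [nra|]. intros y Hy.
  set (z := b + / m * (y - b)).
  assert (Hz : b <= z <= b + e).
  { unfold z. assert (0 < / m) by now apply Rinv_0_lt_compat.
    assert (/ m * (y - b) <= / m * (m * e)) by (apply Rmult_le_compat_l; lra).
    rewrite <- Rmult_assoc, Rinv_l in H0 by lra. nra. }
  rewrite <- (I1 z), HF by auto. f_equal. unfold z. field. lra.
Qed.

Lemma right_germ_comp (F G : R -> R) (b m1 m2 : R) :
  right_germ F b m1 -> right_germ G b m2 -> right_germ (fun y => G (F y)) b (m2 * m1).
Proof.
  intros [Hm1 [e1 [He1 HF]]] [Hm2 [e2 [He2 HG]]]. split; [nra|].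
  set (e := Rmin e1 (e2 / m1)).
  assert (Hpos : 0 < e) by (apply Rmin_glb_lt; auto; apply Rdiv_lt_0_compat; auto).
  assert (e <= e1) by apply Rmin_l. assert (He2' : e <= e2 / m1) by apply Rmin_r.
  exists e. split; auto. intros y Hy. rewrite HF by lra. rewrite HG; [ring|].
  assert (m1 * (y - b) <= m1 * (e2 / m1)) by (apply Rmult_le_compat_l; lra).
  replace (m1 * (e2 / m1)) with e2 in H0 by (field; lra). nra.
Qed.

Lemma right_germ_agree (F G : R -> R) (b m : R) :
  right_germ F b m -> right_germ G b m ->
  exists e, 0 < e /\ forall y, b <= y <= b + e -> F y = G y.
Proof.
  intros [_ [e1 [He1 HF]]] [_ [e2 [He2 HG]]].
  exists (Rmin e1 e2). split; [now apply Rmin_glb_lt|].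
  intros y Hy. assert (Rmin e1 e2 <= e1) by apply Rmin_l. assert (Rmin e1 e2 <= e2) by apply Rmin_r.
  rewrite HF, HG by lra. reflexivity.
Qed.

(* [conj_pow f h fi N] is [h] conjugated by [f^N]: in right-action notation, [h^(f^N)]. *)
Definition conj_pow (f h fi : R -> R) (N : nat) (t : R) : R :=
  Nat.iter N f (h (Nat.iter N fi t)).

Lemma conj_pow_succ (f h fi : R -> R) (N : nat) (t : R) :
  conj_pow f h fi (S N) t = f (conj_pow f h fi N (fi t)).
Proof. unfold conj_pow. now rewrite (Nat.iter_succ_r N _ fi). Qed.

Lemma conj_pow_isinv (f h fi hi : R -> R) (N : nat) :
  isinv f fi -> isinv h hi -> isinv (conj_pow f h fi N) (conj_pow f hi fi N).
Proof.
  intros Hf [B1 B2]. destruct (isinv_iter f fi Hf N) as [A1 A2].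
  unfold conj_pow; split; intros x; now rewrite A1, ?B1, ?B2, A2.
Qed.

Lemma conj_pow_increasing (f h fi : R -> R) (N : nat) :
  isinv f fi -> increasing f -> increasing h -> increasing (conj_pow f h fi N).
Proof.
  intros Hfi Hf Hh x y Hxy. unfold conj_pow.
  apply increasing_iter, Hh, increasing_iter; auto. now apply (isinv_increasing f fi).
Qed.

Lemma conj_pow_tame (f h fi : R -> R) (N : nat) :
  isinv f fi -> increasing f -> tame h -> tame (conj_pow f h fi N).
Proof.
  intros Hfi Hf Hh.
  exact (tame_conj h (Nat.iter N f) (Nat.iter N fi) Hh (isinv_iter f fi Hfi N)
           (increasing_iter f Hf N)).
Qed.

Section ConjugateRelations.
Variables f h fi hi : R -> R.
Hypothesis Hf : isinv f fi.
Hypothesis Hh : isinv h hi.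
Notation H := (conj_pow f h fi).

Definition shift_rel (i n : nat) := forall t, H i (H n t) = H (S n) (H i t).

Lemma shift_rel_succ (i n : nat) : shift_rel i n -> shift_rel (S i) (S n).
Proof.
  intros Hr t.
  rewrite (conj_pow_succ f h fi (S n)), (conj_pow_succ f h fi n t), !(conj_pow_succ f h fi i).
  rewrite !(proj1 Hf). now rewrite Hr.
Qed.

Lemma shift_rel_add (k i n : nat) : shift_rel i n -> shift_rel (k + i) (k + n).
Proof. induction k; simpl; auto. intros. now apply shift_rel_succ, IHk. Qed.

Lemma commute_iff_shift_rel (n : nat) :
  (forall t, hi (f (H n t)) = H n (hi (f t))) <-> shift_rel 0 n.
Proof.
  assert (HfH : forall t, f (H n t) = H (S n) (f t)) by (intros; now rewrite conj_pow_succ, (proj1 Hf)).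
  split; intros Hc t; simpl in *.
  - specialize (Hc (fi (h t))). rewrite (proj2 Hf), (proj1 Hh) in Hc.
    rewrite conj_pow_succ, <- Hc. apply (proj2 Hh).
  - specialize (Hc (hi (f t))). rewrite (proj2 Hh), <- HfH in Hc.
    rewrite <- Hc. apply (proj1 Hh).
Qed.

(* [h^(f^(m+3))] is [h^(f^(m+2))] conjugated by [h^(f^(m+1))], and conjugation by [h]
   shifts both of these one step up. *)
Lemma shift_rel_0 (n : nat) : shift_rel 0 1 -> shift_rel 0 2 -> (1 <= n)%nat -> shift_rel 0 n.
Proof.
  intros R1 R2. induction n as [n IH] using Wf_nat.lt_wf_ind. intros Hn.
  destruct n as [|[|[|m]]]; try lia; auto.
  assert (Ra : shift_rel (S m) (S (S m))).
  { pose proof (shift_rel_add (S m) 0 1 R1) as E. now rewrite Nat.add_0_r, Nat.add_1_r in E. }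
  assert (Rb : shift_rel (S (S m)) (S (S (S m)))).
  { pose proof (shift_rel_add (S (S m)) 0 1 R1) as E. now rewrite Nat.add_0_r, Nat.add_1_r in E. }
  assert (Rc : shift_rel 0 (S m)) by (apply IH; lia).
  assert (Rd : shift_rel 0 (S (S m))) by (apply IH; lia).
  destruct (conj_pow_isinv f h fi hi (S m) Hf Hh) as [I1 I2].
  destruct (conj_pow_isinv f h fi hi (S (S m)) Hf Hh) as [J1 J2].
  change (forall t, h (H (S m) t) = H (S (S m)) (h t)) in Rc.
  change (forall t, h (H (S (S m)) t) = H (S (S (S m))) (h t)) in Rd.
  intros t. change (h (H (S (S (S m))) t) = H (S (S (S (S m)))) (h t)).
  assert (E1 : H (S (S (S m))) t = H (S m) (H (S (S m)) (conj_pow f hi fi (S m) t))).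
  { rewrite Ra. now rewrite I2. }
  assert (E2 : h (conj_pow f hi fi (S m) t) = conj_pow f hi fi (S (S m)) (h t)).
  { rewrite <- (J1 (h (conj_pow f hi fi (S m) t))), <- Rc. now rewrite I2. }
  rewrite E1, Rc, Rd, E2, Rb. now rewrite J2.
Qed.

End ConjugateRelations.

Lemma commute_conj_pow (f h fi hi : R -> R) : isinv f fi -> isinv h hi ->
  (forall t, hi (f (conj_pow f h fi 1 t)) = conj_pow f h fi 1 (hi (f t))) ->
  (forall t, hi (f (conj_pow f h fi 2 t)) = conj_pow f h fi 2 (hi (f t))) ->
  forall n, (1 <= n)%nat -> forall t, hi (f (conj_pow f h fi n t)) = conj_pow f h fi n (hi (f t)).
Proof.
  intros Hf Hh C1 C2 n Hn.
  apply (commute_iff_shift_rel f h fi hi Hf Hh n), (shift_rel_0 f h fi hi Hf Hh); auto.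
  - now apply (commute_iff_shift_rel f h fi hi Hf Hh 1).
  - now apply (commute_iff_shift_rel f h fi hi Hf Hh 2).
Qed.

Section Commuting.
Variables f h fi hi : R -> R.
Hypothesis Hf : PL0 f.
Hypothesis Hh : PL0 h.
Hypothesis Hfi : isinv f fi.
Hypothesis Hhi : isinv h hi.
Notation H := (conj_pow f h fi).
Notation fN N := (Nat.iter N f).
Notation fiN N := (Nat.iter N fi).

(* [g] is the element [f0 f1^-1] of the theorem. *)
Let g x := hi (f x).
Let gi x := fi (h x).

Hypothesis g_commutes : forall N, (1 <= N)%nat -> forall t, g (H N t) = H N (g t).

Lemma f_increasing : increasing f. Proof. now apply PL0_increasing. Qed.
Lemma h_increasing : increasing h. Proof. now apply PL0_increasing. Qed.
Lemma fi_increasing : increasing fi. Proof. exact (isinv_increasing f fi Hfi f_increasing). Qed.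
Lemma hi_increasing : increasing hi. Proof. exact (isinv_increasing h hi Hhi h_increasing). Qed.

Lemma g_isinv : isinv g gi.
Proof.
  unfold g, gi; split; intros x.
  - now rewrite (proj2 Hhi), (proj1 Hfi).
  - now rewrite (proj2 Hfi), (proj1 Hhi).
Qed.

Lemma g_increasing : increasing g.
Proof. intros x y Hxy. apply hi_increasing, f_increasing, Hxy. Qed.

Lemma g_fixed_iff x : g x = x <-> f x = h x.
Proof.
  unfold g; split; intros E.
  - rewrite <- E at 2. now rewrite (proj2 Hhi).
  - rewrite E. apply (proj1 Hhi).
Qed.

Lemma agreement_continuous : forall z, continuity_pt (fun y => f y - h y) z.
Proof. intros z. apply continuity_pt_minus; now apply PL0_continuous. Qed.

(* [g] commutes with [h^(f^N)], which fixes [f^N e] and moves points next to it;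
   the conclusion says [g (f^N e) = f^N e]. *)
Lemma forward_orbit_rel (e : R) : h e = e -> moved_near h (fun _ => True) e ->
  forall N, (1 <= N)%nat -> h (fN N e) = fN (S N) e.
Proof.
  intros He Hmov N HN.
  destruct (isinv_iter f fi Hfi N) as [I1 I2].
  assert (Hg : g (fN N e) = fN N e).
  { apply (tame_commuting_fixes g gi (H N) (fun _ => True)); auto.
    - exact g_isinv.
    - exact g_increasing.
    - intros x _. now rewrite g_commutes.
    - apply conj_pow_tame; auto; [exact f_increasing|now apply PL0_tame].
    - unfold conj_pow. now rewrite I1, He.
    - apply (moved_near_conj h (fN N) (fiN N) e); auto.
      + now apply isinv_iter.
      + exact (increasing_iter f f_increasing N). }
  apply g_fixed_iff in Hg. now simpl.
Qed.

(* [h^(f^N)] commutes with [g], which fixes [e] and moves points next to it. *)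
Lemma backward_orbit_fixed (e : R) : f e = h e -> moved_near g (fun _ => True) e ->
  forall N, (1 <= N)%nat -> h (fiN N e) = fiN N e.
Proof.
  intros He Hmov N HN.
  assert (HN_e : H N e = e).
  { apply (tame_commuting_fixes (H N) (conj_pow f hi fi N) g (fun _ => True)); auto.
    - now apply conj_pow_isinv.
    - apply conj_pow_increasing; auto; [exact f_increasing|exact h_increasing].
    - apply (tame_of_agreement f h g Hf Hh g_fixed_iff).
    - now apply g_fixed_iff. }
  unfold conj_pow in HN_e. rewrite <- HN_e at 2. now rewrite (proj1 (isinv_iter f fi Hfi N)).
Qed.

(* Both germs have the slope of [h] at [b]. *)
Lemma conj_pow_1_2_germ (b : R) : f b = b -> h b = b ->
  exists e, 0 < e /\ forall y, b <= y <= b + e -> H 1 y = H 2 y.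
Proof.
  intros Hfb Hhb.
  destruct (PL0_right_germ f b Hf Hfb) as [mf Gf].
  destruct (PL0_right_germ h b Hh Hhb) as [mh Gh].
  pose proof (right_germ_inv f fi b mf Gf Hfi) as Gfi.
  pose proof (right_germ_comp _ _ _ _ _ (right_germ_comp _ _ _ _ _ Gfi Gh) Gf) as G1.
  pose proof (right_germ_comp _ _ _ _ _
    (right_germ_comp _ _ _ _ _ (right_germ_comp _ _ _ _ _ (right_germ_comp _ _ _ _ _ Gfi Gfi) Gh) Gf)
    Gf) as G2.
  replace (mf * (mf * (mh * (/ mf * / mf)))) with (mf * (mh * / mf)) in G2
    by (destruct Gf; field; lra).
  exact (right_germ_agree _ _ b _ G1 G2).
Qed.

Lemma conj_pow_1_2_agree_on_g_orbital (b d e : R) :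
  b < d -> g b = b -> (forall z, b < z < d -> f z <> h z) -> 0 < e ->
  (forall y, b <= y <= b + e -> H 1 y = H 2 y) ->
  forall x, b < x < d -> H 1 x = H 2 x.
Proof.
  intros Hbd Hgb Hne He Hgerm x Hx.
  set (D := fun y => H 1 y = H 2 y).
  assert (D_g : forall y, D (g y) -> D y).
  { unfold D. intros y Hy.
    rewrite <- (proj1 g_isinv (H 1 y)), <- (proj1 g_isinv (H 2 y)), !g_commutes by lia.
    now rewrite Hy. }
  assert (D_gi : forall y, D (gi y) -> D y).
  { unfold D. intros y Hy. rewrite <- (proj2 g_isinv y), <- !g_commutes by lia. now rewrite Hy. }
  assert (D_iter : forall s, (forall y, D (s y) -> D y) -> forall j, D (Nat.iter j s x) -> D x).
  { intros s Hs j. induction j; simpl; auto. }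
  assert (Hgx : g x <> x) by (intros E; apply g_fixed_iff in E; apply (Hne x); auto).
  assert (Hcont := PL0_continuous f Hf). assert (Hconth := PL0_continuous h Hh).
  assert (Hne' : forall z, b < z <= x -> f z <> h z) by (intros z Hz; apply Hne; lra).
  destruct (Rlt_or_le (g x) x) as [Hlt|Hle].
  - destruct (descending_orbit_approaches g f h b x e g_increasing Hgb (proj1 Hx) Hlt He
      Hcont Hconth) as [j Hj]; auto.
    + intros j. simpl. unfold g at 2. now rewrite (proj2 Hhi).
    + apply (D_iter g D_g j), Hgerm. lra.
  - assert (Hgib : gi b = b) by (rewrite <- Hgb at 1; apply (proj1 g_isinv)).
    assert (Hgix : gi x < x).
    { rewrite <- (proj1 g_isinv x) at 2.
      apply (isinv_increasing g gi g_isinv g_increasing). destruct Hle; [easy|congruence]. }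
    destruct (descending_orbit_approaches gi h f b x e
      (isinv_increasing g gi g_isinv g_increasing) Hgib (proj1 Hx) Hgix He
      Hconth Hcont) as [j Hj]; auto.
    + intros j. simpl. unfold gi at 2. now rewrite (proj2 Hfi).
    + intros z Hz E. apply (Hne' z Hz). now symmetry.
    + apply (D_iter gi D_gi j), Hgerm. lra.
Qed.

Lemma commute_on_g_orbital (b d : R) :
  b < d -> f b = b -> h b = b -> f d = d -> (forall z, b < z < d -> f z <> h z) ->
  forall y, b < y < d -> h (f y) = f (h y).
Proof.
  intros Hbd Hfb Hhb Hfd Hne y Hy.
  destruct (conj_pow_1_2_germ b Hfb Hhb) as [e [He Hgerm]].
  assert (Hgb : g b = b) by (apply g_fixed_iff; congruence).
  assert (Hffy : b < f (f y) < d).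
  { pose proof (f_increasing _ _ (f_increasing b y (proj1 Hy))) as Hl.
    pose proof (f_increasing _ _ (f_increasing y d (proj2 Hy))) as Hr.
    rewrite !Hfb in Hl. rewrite !Hfd in Hr. lra. }
  pose proof (conj_pow_1_2_agree_on_g_orbital b d e Hbd Hgb Hne He Hgerm _ Hffy) as E.
  unfold conj_pow in E; simpl in E. rewrite !(proj1 Hfi) in E.
  apply (f_equal fi) in E. now rewrite !(proj1 Hfi) in E.
Qed.

Section Bump.
Variables a c : R.
Hypothesis Hup : up_bump f a c.

Lemma a_lt_c : a < c. Proof. now destruct Hup as [[H _] _]. Qed.
Lemma f_fixes_a : f a = a. Proof. destruct Hup as [[_ [_ [Ha _]]] _]. now apply NNPP. Qed.
Lemma f_fixes_c : f c = c. Proof. destruct Hup as [[_ [_ [_ Hc]]] _]. now apply NNPP. Qed.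
Lemma f_up x : a < x < c -> x < f x. Proof. destruct Hup as [_ H]; auto. Qed.

Lemma f_maps_bump x : a < x < c -> a < f x < c.
Proof.
  intros Hx. pose proof (f_up x Hx). pose proof (f_increasing x c ltac:(lra)).
  rewrite f_fixes_c in *. lra.
Qed.

Lemma fi_fixes_a : fi a = a. Proof. rewrite <- f_fixes_a at 1. apply (proj1 Hfi). Qed.
Lemma fi_fixes_c : fi c = c. Proof. rewrite <- f_fixes_c at 1. apply (proj1 Hfi). Qed.

Lemma fi_maps_bump_down x : a < x < c -> a < fi x < x.
Proof.
  intros Hx. pose proof (fi_increasing a x ltac:(lra)) as Ha.
  pose proof (fi_increasing x c ltac:(lra)) as Hc.
  rewrite fi_fixes_a in Ha. rewrite fi_fixes_c in Hc.
  split; auto. rewrite <- (proj2 Hfi x) at 2. apply f_up. lra.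
Qed.

Lemma iter_f_maps_bump N x : a < x < c -> a < fN N x < c.
Proof. induction N; simpl; auto. intros. now apply f_maps_bump, IHN. Qed.

Lemma iter_fi_maps_bump N x : a < x < c -> a < fiN N x < c.
Proof.
  induction N; simpl; auto. intros Hx. specialize (IHN Hx).
  pose proof (fi_maps_bump_down _ IHN). lra.
Qed.

Lemma iter_f_le N M x : a < x < c -> (N <= M)%nat -> fN N x <= fN M x.
Proof.
  intros Hx HNM. induction HNM; [lra|]. simpl.
  pose proof (f_up _ (iter_f_maps_bump m x Hx)). lra.
Qed.

Lemma iter_f_exceeds x z : a < x < c -> z < c -> exists N, z < fN N x.
Proof.
  intros Hx Hz. apply NNPP. intros Hno.
  destruct (increasing_bounded_shift_eq (fun j => fN j x) z f (fun y => y)) as [L [HL E]].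
  - intros j. left. apply f_up, iter_f_maps_bump, Hx.
  - intros j. apply Rnot_lt_le. intros Hj. apply Hno. now exists j.
  - now apply PL0_continuous.
  - intros y. reg.
  - reflexivity.
  - simpl in HL. pose proof (f_up L ltac:(lra)). lra.
Qed.

Lemma iter_fi_below x z : a < x < c -> a < z -> exists N, fiN N x < z.
Proof.
  intros Hx Hz. apply NNPP. intros Hno.
  destruct (decreasing_bounded_shift_eq (fun j => fiN j x) z (fun y => y) f) as [L [HL E]].
  - intros j. left. apply fi_maps_bump_down, iter_fi_maps_bump, Hx.
  - intros j. apply Rnot_lt_le. intros Hj. apply Hno. now exists j.
  - intros y. reg.
  - now apply PL0_continuous.
  - intros j. simpl. now rewrite (proj2 Hfi).
  - simpl in HL. pose proof (f_up L ltac:(lra)). lra.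
Qed.

Lemma g_moved_near_of_interval (u w : R) : u < w ->
  (forall z, u < z < w -> f z <> h z) -> moved_near g (fun _ => True) u /\ moved_near g (fun _ => True) w.
Proof.
  intros Huw Hne.
  assert (Hg : forall z, u < z < w -> g z <> z) by (intros z Hz E; now apply (Hne z), g_fixed_iff).
  split; [left|right]; exists (w - u); (split; [lra|]); intros z Hz; (split; [easy|]); apply Hg; lra.
Qed.

(* An agreement point next to a disagreement would make [h] fix the points of
   its backward [f]-orbit, which tends to [a]. *)
Lemma agreement_all_or_nothing (r : R) : 0 < r -> (forall x, a < x < a + r -> h x <> x) ->
  forall x y, a < x < c -> a < y < c -> f x <> h x -> f y <> h y.
Proof.
  intros Hr Hmov x y Hx Hy Hne Hagree.
  destruct (PL0_disagreement_interval f h x Hf Hh Hne) as [u [w [Hux [Hu [Hw Hfree]]]]].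
  destruct (g_moved_near_of_interval u w ltac:(lra) Hfree) as [Hmu Hmw].
  assert (He : exists e, a < e < c /\ f e = h e /\ moved_near g (fun _ => True) e).
  { destruct (Rle_or_lt y u).
    - exists u. repeat split; auto; lra.
    - destruct (Rle_or_lt w y).
      + exists w. repeat split; auto; lra.
      + exfalso. apply (Hfree y); auto. }
  destruct He as [e [He [Hfe Hme]]].
  destruct (iter_fi_below e (a + r) He ltac:(lra)) as [N HN].
  pose proof (fi_maps_bump_down _ (iter_fi_maps_bump N e He)).
  apply (Hmov (fiN (S N) e)); [simpl; lra|].
  apply (backward_orbit_fixed e Hfe Hme). lia.
Qed.

Lemma orbital_of_agreement : (forall x, a < x < c -> f x = h x) -> orbital h a c.
Proof.
  intros Hagree.
  destruct (zero_on_interval_ends (fun y => f y - h y) a c (agreement_continuous a)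
              (agreement_continuous c) a_lt_c) as [Ea Ec].
  { intros x Hx. rewrite Hagree by auto. ring. }
  rewrite f_fixes_a in Ea. rewrite f_fixes_c in Ec.
  split; [exact a_lt_c|]. split; [|unfold supp; split; lra].
  intros x Hx. unfold supp. rewrite <- Hagree by auto. pose proof (f_up x Hx). lra.
Qed.

Lemma h_fixes_bump_end_inside (u w e : R) : h u = u -> h w = w ->
  (forall y, u < y < w -> h (f y) = f (h y)) -> (e = a \/ e = c) -> u < e < w -> h e = e.
Proof.
  intros Hu Hw Hcomm He Hue.
  set (S0 := fun z => u < z < w).
  assert (Hhu : hi u = u) by (rewrite <- Hu at 1; apply (proj1 Hhi)).
  assert (Hhw : hi w = w) by (rewrite <- Hw at 1; apply (proj1 Hhi)).
  pose proof a_lt_c.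
  apply (tame_commuting_fixes h hi f S0 e Hhi h_increasing).
  - intros z Hz. pose proof (h_increasing u z (proj1 Hz)). pose proof (h_increasing z w (proj2 Hz)).
    unfold S0. lra.
  - intros z Hz. pose proof (hi_increasing u z (proj1 Hz)). pose proof (hi_increasing z w (proj2 Hz)).
    unfold S0. lra.
  - intros z Hz. symmetry. now apply Hcomm.
  - now apply PL0_tame.
  - exact Hue.
  - destruct He as [->| ->]; [exact f_fixes_a|exact f_fixes_c].
  - destruct He as [->| ->].
    + left. exists (Rmin (c - a) (w - a)). split; [apply Rmin_glb_lt; lra|].
      intros z Hz. pose proof (Rmin_l (c - a) (w - a)). pose proof (Rmin_r (c - a) (w - a)).
      split; [unfold S0; lra|]. pose proof (f_up z ltac:(lra)). lra.
    + right. exists (Rmin (c - a) (c - u)). split; [apply Rmin_glb_lt; lra|].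
      intros z Hz. pose proof (Rmin_l (c - a) (c - u)). pose proof (Rmin_r (c - a) (c - u)).
      split; [unfold S0; lra|]. pose proof (f_up z ltac:(lra)). lra.
Qed.

Lemma fixed_of_orbit_constant (u v : R) : (forall N, (1 <= N)%nat -> u = fN N v) -> f v = v /\ u = v.
Proof.
  intros Hu. pose proof (Hu 1%nat ltac:(lia)) as E1. pose proof (Hu 2%nat ltac:(lia)) as E2.
  simpl in E1, E2. assert (Hv : f v = v).
  { assert (E : f (f v) = f v) by congruence.
    apply (f_equal fi) in E. now rewrite !(proj1 Hfi) in E. }
  split; auto. now rewrite E1.
Qed.

Lemma forward_orbit_agrees (e : R) : h e = e -> moved_near h (fun _ => True) e ->
  forall N, (1 <= N)%nat -> f (fN N e) = h (fN N e).
Proof. intros He Hmov N HN. now rewrite (forward_orbit_rel e He Hmov N HN). Qed.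

Section Orbitals.
Variable n : nat.
Variables b d : nat -> R.
Hypothesis Hnot : ~ orbital h a c.
Hypothesis Hn : (1 <= n)%nat.
Hypothesis Horb : forall i, (1 <= i <= n)%nat ->
  orbital h (b i) (d i) /\ b i < c /\ a < d i.
Hypothesis Hord : forall i, (1 <= i < n)%nat -> d i <= b (S i).
Hypothesis Hall : forall x y, orbital h x y -> x < c -> a < y ->
  exists i, (1 <= i <= n)%nat /\ x = b i /\ y = d i.

Lemma orbital_i i : (1 <= i <= n)%nat -> b i < d i /\ h (b i) = b i /\ h (d i) = d i /\
  (forall z, b i < z < d i -> h z <> z) /\ b i < c /\ a < d i.
Proof.
  intros Hi. destruct (Horb i Hi) as [Ho Hm]. pose proof (orbital_spec h _ _ Ho). tauto.
Qed.

Lemma h_moved_near_orbital_ends i : (1 <= i <= n)%nat ->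
  moved_near h (fun _ => True) (b i) /\ moved_near h (fun _ => True) (d i).
Proof.
  intros Hi. destruct (orbital_i i Hi) as [Hbd [_ [_ [Hmov _]]]].
  split; [left|right]; exists (d i - b i); (split; [lra|]); intros z Hz;
    (split; [easy|]); apply Hmov; lra.
Qed.

Lemma orbital_bounds i : (1 <= i <= n)%nat -> b 1%nat <= b i /\ d i <= d n.
Proof.
  intros Hi. split.
  - induction i as [|i IH]; [lia|]. destruct (Nat.eq_dec i 0) as [->|]; [lra|].
    pose proof (IH ltac:(lia)). pose proof (orbital_i i ltac:(lia)).
    pose proof (Hord i ltac:(lia)). lra.
  - remember (n - i)%nat as k eqn:Hk. revert i Hi Hk.
    induction k as [|k IH]; intros i Hi Hk; [replace i with n by lia; lra|].
    pose proof (IH (S i) ltac:(lia) ltac:(lia)). pose proof (orbital_i (S i) ltac:(lia)).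
    pose proof (Hord i ltac:(lia)). lra.
Qed.

Lemma moved_in_orbital x : a < x < c -> h x <> x ->
  exists i, (1 <= i <= n)%nat /\ b i < x < d i.
Proof.
  intros Hx Hhx.
  destruct (PL0_disagreement_interval h (fun y => y) x Hh PL0_id Hhx)
    as [u [w [Hux [Hu [Hw Hfree]]]]].
  destruct (Hall u w) as [i [Hi [-> ->]]]; try lra.
  - split; [lra|]. unfold supp. repeat split; auto.
  - exists i. split; auto.
Qed.

Lemma g_orbital_left_end (u w : R) : u <= a < w -> f u = h u ->
  (forall z, u < z < w -> f z <> h z) -> b 1%nat <= a -> f (b 1%nat) = b 1%nat /\ u = b 1%nat.
Proof.
  intros Hu Hfu Hfree Hb1.
  destruct (orbital_i 1 ltac:(lia)) as [_ [Hhb [_ [Hmov [_ Hd1]]]]].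
  destruct (g_moved_near_of_interval u w ltac:(lra) Hfree) as [Hmu _].
  apply fixed_of_orbit_constant. intros N HN. apply Rle_antisym.
  - pose proof (backward_orbit_fixed u Hfu Hmu N HN) as Hfix.
    assert (fiN N u <= a).
    { rewrite <- (iter_fixed fi a fi_fixes_a N).
      exact (increasing_le _ (increasing_iter fi fi_increasing N) u a (proj1 Hu)). }
    assert (fiN N u <= b 1%nat).
    { apply Rnot_lt_le. intros Hlt. apply (Hmov (fiN N u)); auto. lra. }
    rewrite <- (proj2 (isinv_iter f fi Hfi N) u).
    now apply (increasing_le _ (increasing_iter f f_increasing N)).
  - pose proof (forward_orbit_agrees _ Hhb (proj1 (h_moved_near_orbital_ends 1 ltac:(lia))) N HN).
    assert (fN N (b 1%nat) <= a).
    { rewrite <- (iter_fixed f a f_fixes_a N).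
      now apply (increasing_le _ (increasing_iter f f_increasing N)). }
    apply Rnot_lt_le. intros Hlt. apply (Hfree (fN N (b 1%nat))); auto. lra.
Qed.

Lemma g_orbital_right_end (u w : R) : u < c <= w -> f w = h w ->
  (forall z, u < z < w -> f z <> h z) -> c <= d 1%nat -> f (d 1%nat) = d 1%nat /\ w = d 1%nat.
Proof.
  intros Hw Hfw Hfree Hd1.
  destruct (orbital_i 1 ltac:(lia)) as [_ [_ [Hhd [Hmov [Hb1 _]]]]].
  destruct (g_moved_near_of_interval u w ltac:(lra) Hfree) as [_ Hmw].
  apply fixed_of_orbit_constant. intros N HN. apply Rle_antisym.
  - pose proof (forward_orbit_agrees _ Hhd (proj2 (h_moved_near_orbital_ends 1 ltac:(lia))) N HN).
    assert (c <= fN N (d 1%nat)).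
    { rewrite <- (iter_fixed f c f_fixes_c N).
      now apply (increasing_le _ (increasing_iter f f_increasing N)). }
    apply Rnot_lt_le. intros Hlt. apply (Hfree (fN N (d 1%nat))); auto. lra.
  - pose proof (backward_orbit_fixed w Hfw Hmw N HN) as Hfix.
    assert (c <= fiN N w).
    { rewrite <- (iter_fixed fi c fi_fixes_c N).
      exact (increasing_le _ (increasing_iter fi fi_increasing N) c w (proj2 Hw)). }
    assert (d 1%nat <= fiN N w).
    { apply Rnot_lt_le. intros Hlt. apply (Hmov (fiN N w)); auto. lra. }
    rewrite <- (proj2 (isinv_iter f fi Hfi N) w).
    now apply (increasing_le _ (increasing_iter f f_increasing N)).
Qed.

Lemma first_orbital_starts_inside : a < b 1%nat.
Proof.
  apply Rnot_le_lt. intros Hb1. pose proof a_lt_c as Hac.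
  destruct (orbital_i 1 ltac:(lia)) as [Hbd [Hhb [Hhd [Hmov [Hb1c Hd1]]]]].
  assert (Hdis : forall x, a < x < c -> f x <> h x).
  { destruct (classic (exists x, a < x < c /\ f x <> h x)) as [[x0 [Hx0 Hne0]]|Hno].
    - intros y Hy. apply (agreement_all_or_nothing (Rmin (d 1%nat) c - a)) with (x := x0); auto.
      + assert (a < Rmin (d 1%nat) c) by (apply Rmin_glb_lt; lra). lra.
      + intros z Hz. apply Hmov. pose proof (Rmin_l (d 1%nat) c). lra.
    - exfalso. apply Hnot, orbital_of_agreement. intros x Hx.
      apply NNPP. intros Hne. apply Hno. now exists x. }
  assert (Hd1c : c <= d 1%nat).
  { apply Rnot_lt_le. intros Hlt. apply (Hdis (f (d 1%nat))); [apply f_maps_bump; lra|].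
    exact (forward_orbit_agrees _ Hhd (proj2 (h_moved_near_orbital_ends 1 ltac:(lia))) 1 (le_n 1)). }
  set (x0 := (a + c) / 2).
  destruct (PL0_disagreement_interval f h x0 Hf Hh (Hdis x0 ltac:(unfold x0; lra)))
    as [u [w [Hux [Hu [Hw Hfree]]]]].
  assert (Hua : u <= a) by (apply Rnot_lt_le; intros Hlt; apply (Hdis u); auto; unfold x0 in *; lra).
  assert (Hwc : c <= w) by (apply Rnot_lt_le; intros Hlt; apply (Hdis w); auto; unfold x0 in *; lra).
  destruct (g_orbital_left_end u w ltac:(unfold x0 in *; lra) Hu Hfree Hb1) as [Hfb ->].
  destruct (g_orbital_right_end (b 1%nat) w ltac:(lra) Hw Hfree Hd1c) as [Hfd ->].
  pose proof (commute_on_g_orbital _ _ Hbd Hfb Hhb Hfd Hfree) as Hcomm.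
  destruct (Rle_lt_or_eq_dec _ _ Hb1) as [Hlt|Heq].
  - apply (Hmov a); [lra|]. apply (h_fixes_bump_end_inside _ _ a Hhb Hhd Hcomm); auto.
  - assert (Hcd : c < d 1%nat).
    { destruct (Rle_lt_or_eq_dec _ _ Hd1c) as [|E]; auto. exfalso. apply Hnot.
      rewrite <- Heq, E. exact (proj1 (Horb 1 ltac:(lia))). }
    apply (Hmov c); [lra|]. apply (h_fixes_bump_end_inside _ _ c Hhb Hhd Hcomm); auto.
Qed.

Lemma last_orbital_facts : a < b n /\ b n < d n /\ h (b n) = b n /\ h (d n) = d n /\
  (forall z, b n < z < d n -> h z <> z) /\ b n < c /\ a < d n.
Proof.
  pose proof first_orbital_starts_inside. pose proof (orbital_bounds n ltac:(lia)).
  pose proof (orbital_i n ltac:(lia)). repeat split; tauto || lra.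
Qed.

Lemma forward_orbit_of_last (N : nat) : (1 <= N)%nat -> h (fN N (b n)) = fN (S N) (b n).
Proof.
  destruct last_orbital_facts as [_ [_ [Hhb _]]].
  apply (forward_orbit_rel _ Hhb), (h_moved_near_orbital_ends n ltac:(lia)).
Qed.

(* If [d n < c], then [h] is the identity on [[d n, c)], and [g] cannot commute
   with [h^f] at a point [x] of [[d n, c)] with [fi x] in [(b n, d n)]. *)
Lemma last_orbital_not_before_c : ~ d n < c.
Proof.
  intros Hlt. destruct last_orbital_facts as [Hab [Hbd [_ [_ [Hmov _]]]]].
  assert (Hfix : forall x, d n <= x < c -> h x = x).
  { intros x Hx. apply NNPP. intros Hne.
    destruct (moved_in_orbital x ltac:(lra) Hne) as [i [Hi Hbi]].
    pose proof (orbital_bounds i Hi). lra. }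
  assert (Hfbd : f (b n) < f (d n)) by (apply f_increasing; lra).
  assert (Hfd : d n < f (d n) < c) by (split; [apply f_up|apply f_maps_bump]; lra).
  set (x := (Rmax (d n) (f (b n)) + f (d n)) / 2).
  assert (Hx : d n <= x /\ f (b n) < x < f (d n)).
  { pose proof (Rmax_l (d n) (f (b n))). pose proof (Rmax_r (d n) (f (b n))).
    assert (Rmax (d n) (f (b n)) < f (d n)) by (apply Rmax_lub_lt; lra). unfold x. lra. }
  assert (Hfix_x : b n < fi x < d n).
  { rewrite <- (proj1 Hfi (b n)), <- (proj1 Hfi (d n)). split; apply fi_increasing; lra. }
  assert (Hfx : x < f x < c) by (split; [apply f_up|apply f_maps_bump]; lra).
  assert (Hgx : g x = f x).
  { unfold g. rewrite <- (Hfix (f x)) at 1 by lra. apply (proj1 Hhi). }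
  assert (HHgx : H 1 (g x) = g x).
  { rewrite Hgx. unfold conj_pow; simpl. now rewrite (proj1 Hfi), (Hfix x) by lra. }
  assert (HHx : H 1 x = x).
  { rewrite <- (proj1 g_isinv (H 1 x)), g_commutes, HHgx by lia. apply (proj1 g_isinv). }
  unfold conj_pow in HHx; simpl in HHx.
  apply (Hmov (fi x)); auto. now rewrite <- (proj1 Hfi (h (fi x))), HHx.
Qed.

(* If [d n > c], then [h c <> c], while [h] maps the [f]-orbit of [b n], which
   tends to [c], into itself. *)
Lemma last_orbital_not_beyond_c : ~ c < d n.
Proof.
  intros Hgt. destruct last_orbital_facts as [Hab [_ [_ [_ [Hmov [Hbc _]]]]]].
  assert (Hbn : a < b n < c) by lra.
  assert (Hhc : h c <> c) by (apply Hmov; lra).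
  destruct (Rtotal_order (h c) c) as [Hl|[He|Hl]]; [|contradiction|].
  - destruct (iter_f_exceeds (b n) (h c) Hbn Hl) as [M HM].
    pose proof (iter_f_le M (S (S M)) (b n) Hbn ltac:(lia)).
    pose proof (forward_orbit_of_last (S M) ltac:(lia)).
    pose proof (iter_f_maps_bump (S M) (b n) Hbn).
    assert (c < fN (S M) (b n)) by (apply (increasing_reflect h h_increasing); lra). lra.
  - assert (Hhic : hi c < c) by (rewrite <- (proj1 Hhi c) at 2; now apply hi_increasing).
    destruct (iter_f_exceeds (b n) (hi c) Hbn Hhic) as [M HM].
    pose proof (iter_f_le M (S M) (b n) Hbn ltac:(lia)).
    pose proof (forward_orbit_of_last (S M) ltac:(lia)).
    pose proof (iter_f_maps_bump (S (S M)) (b n) Hbn).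
    assert (c < h (fN (S M) (b n))) by (rewrite <- (proj2 Hhi c); apply h_increasing; lra).
    simpl in *. lra.
Qed.

Lemma last_orbital_ends_at_c : d n = c.
Proof.
  destruct (Rtotal_order (d n) c) as [Hlt|[Heq|Hgt]]; auto.
  - now exfalso; apply last_orbital_not_before_c.
  - now exfalso; apply last_orbital_not_beyond_c.
Qed.

Lemma agree_near_c : exists p, p < c /\ agree_on f h p c.
Proof.
  destruct last_orbital_facts as [Hab [_ [_ [Hhd [_ [Hbc _]]]]]].
  rewrite last_orbital_ends_at_c in Hhd.
  destruct (PL0_affine_left f Hf c) as [e1 [He1 Af]].
  destruct (PL0_affine_left h Hh c) as [e2 [He2 Ah]].
  set (e := Rmin e1 e2). assert (e <= e1) by apply Rmin_l. assert (e <= e2) by apply Rmin_r.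
  assert (He : 0 < e) by now apply Rmin_glb_lt.
  assert (Hbn : a < b n < c) by lra.
  destruct (iter_f_exceeds (b n) (c - e) Hbn ltac:(lra)) as [M HM].
  pose proof (iter_f_le M (S M) (b n) Hbn ltac:(lia)).
  pose proof (iter_f_maps_bump (S M) (b n) Hbn).
  exists (c - e). split; [lra|]. intros x Hx.
  apply (affine_agree f h (c - e) c (fN (S M) (b n)) c).
  - apply (affine_on_sub f (c - e1) c); auto; lra.
  - apply (affine_on_sub h (c - e2) c); auto; lra.
  - lra.
  - lra.
  - now rewrite (forward_orbit_of_last (S M)) by lia.
  - now rewrite f_fixes_c.
  - exact Hx.
Qed.

(* Just left of the minimal agreement point [p], [f] and [h] disagree (they are
   affine there), so [h] fixes [fi p]; hence [fi p] is not inside [(b n, c)]. *)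
Lemma min_agreement_point_le (p : R) : agree_on f h p c ->
  (forall q, agree_on f h q c -> p <= q) -> p <= f (b n).
Proof.
  intros Hp Hmin. apply Rnot_lt_le. intros Hgt.
  destruct last_orbital_facts as [Hab [_ [_ [_ [Hmov [Hbc _]]]]]].
  rewrite last_orbital_ends_at_c in Hmov.
  destruct agree_near_c as [p0 [Hp0 Hag0]]. pose proof (Hmin p0 Hag0).
  assert (Hfb : b n < f (b n)) by (apply f_up; lra).
  assert (Hfp : f p = h p) by (apply Hp; lra).
  destruct (PL0_affine_left f Hf p) as [e1 [He1 Af]].
  destruct (PL0_affine_left h Hh p) as [e2 [He2 Ah]].
  set (e := Rmin e1 e2). assert (e <= e1) by apply Rmin_l. assert (e <= e2) by apply Rmin_r.
  assert (He : 0 < e) by now apply Rmin_glb_lt.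
  assert (Hne : forall z, p - e < z < p -> g z <> z).
  { intros z Hz Ez. apply g_fixed_iff in Ez.
    assert (Hz_agree : agree_on f h z c).
    { intros x Hx. destruct (Rle_or_lt x p).
      - apply (affine_agree f h (p - e) p z p); auto; try lra.
        + apply (affine_on_sub f (p - e1) p); auto; lra.
        + apply (affine_on_sub h (p - e2) p); auto; lra.
      - apply Hp. lra. }
    pose proof (Hmin z Hz_agree). lra. }
  assert (Hm : moved_near g (fun _ => True) p) by (right; exists e; split; auto).
  pose proof (backward_orbit_fixed p Hfp Hm 1 (le_n 1)) as Hfix. simpl in Hfix.
  pose proof (fi_maps_bump_down p ltac:(lra)).
  apply (Hmov (fi p)); auto. split; [|lra].
  rewrite <- (proj1 Hfi (b n)). now apply fi_increasing.
Qed.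

(* Otherwise [h] would map the [f]-orbit of [b 1], which tends to [c], below [b n]. *)
Lemma last_orbital_before_f_first : b n < f (b 1%nat).
Proof.
  apply Rnot_le_lt. intros Hle.
  destruct last_orbital_facts as [_ [_ [Hhbn [_ [_ [Hbc _]]]]]].
  pose proof first_orbital_starts_inside.
  destruct (orbital_i 1 ltac:(lia)) as [_ [Hhb1 [_ [_ [Hb1c _]]]]].
  assert (Hb1 : a < b 1%nat < c) by lra.
  assert (Hbelow : forall N, fN (S N) (b 1%nat) <= b n).
  { induction N as [|N IH]; auto.
    rewrite <- (forward_orbit_rel _ Hhb1 (proj1 (h_moved_near_orbital_ends 1 ltac:(lia)))) by lia.
    rewrite <- Hhbn. now apply (increasing_le h h_increasing). }
  destruct (iter_f_exceeds (b 1%nat) (b n) Hb1 Hbc) as [M HM].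
  pose proof (iter_f_le M (S M) (b 1%nat) Hb1 ltac:(lia)). pose proof (Hbelow M). lra.
Qed.

Lemma bump_orbitals_structure :
  a < b 1%nat /\ (exists p, p < c /\ agree_on f h p c) /\ d n = c /\
  (forall p, agree_on f h p c -> (forall q, agree_on f h q c -> p <= q) -> p <= f (b n)) /\
  b n < f (b 1%nat).
Proof.
  repeat split.
  - exact first_orbital_starts_inside.
  - exact agree_near_c.
  - exact last_orbital_ends_at_c.
  - exact min_agreement_point_le.
  - exact last_orbital_before_f_first.
Qed.

End Orbitals.
End Bump.
End Commuting.

Lemma comm_idf_commute (A B A' B' : R -> R) : isinv A A' -> isinv B B' ->
  comm A B = idf -> forall t, B (A t) = A (B t).
Proof.
  intros HA HB E t. pose proof (f_equal (fun F => F t) E) as Et.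
  unfold comm, rmul, idf in Et. rewrite !(inv_unique _ _ HA), !(inv_unique _ _ HB) in Et.
  rewrite <- Et at 2. now rewrite (proj2 HB), (proj2 HA).
Qed.

Lemma conjg_rmul_self (f h fi : R -> R) : isinv f fi ->
  conjg h (rmul f f) = conj_pow f h fi 2.
Proof.
  intros Hf. apply functional_extensionality. intros t.
  assert (Hff : isinv (rmul f f) (fun t => fi (fi t))).
  { unfold rmul. split; intros x; now rewrite ?(proj1 Hf), ?(proj2 Hf). }
  unfold conjg, rmul at 1 2. now rewrite (inv_unique _ _ Hff).
Qed.

Theorem lemma2p5 (f0 f1 : R -> R) (a c : R) (n : nat) (b d : nat -> R) :
  PL0 f0 -> PL0 f1 ->
  comm (conjg f1 f0) (rmul f0 (inv f1)) = idf ->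
  comm (rmul f0 (inv f1)) (conjg f1 (rmul f0 f0)) = idf ->
  up_bump f0 a c ->
  ~ orbital f1 a c ->
  (1 <= n)%nat ->
  (forall i, (1 <= i <= n)%nat ->
     orbital f1 (b i) (d i) /\ b i < c /\ a < d i) ->
  (forall i, (1 <= i < n)%nat -> d i <= b (S i)) ->
  (forall x y, orbital f1 x y -> x < c -> a < y ->
     exists i, (1 <= i <= n)%nat /\ x = b i /\ y = d i) ->
  a < b 1%nat /\
  (exists p, p < c /\ agree_on f0 f1 p c) /\
  d n = c /\
  (forall p, agree_on f0 f1 p c ->
               (forall q, agree_on f0 f1 q c -> p <= q) ->
               p <= f0 (b n)) /\
  b n < f0 (b 1%nat).
Proof.
  intros Hf0 Hf1 Hcomm1 Hcomm2 Hup Hnot Hn Horb Hord Hall.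
  pose proof (PL0_isinv f0 Hf0) as Hi0. pose proof (PL0_isinv f1 Hf1) as Hi1.
  set (g := rmul f0 (inv f1)).
  assert (Hg : isinv g (fun t => inv f0 (f1 t))).
  { unfold g, rmul. split; intros x.
    - now rewrite (proj2 Hi1), (proj1 Hi0).
    - now rewrite (proj2 Hi0), (proj1 Hi1). }
  assert (C1 := comm_idf_commute _ _ _ _ (conj_pow_isinv f0 f1 (inv f0) (inv f1) 1 Hi0 Hi1) Hg Hcomm1).
  rewrite (conjg_rmul_self f0 f1 (inv f0) Hi0) in Hcomm2.
  assert (C2 := comm_idf_commute _ _ _ _ Hg (conj_pow_isinv f0 f1 (inv f0) (inv f1) 2 Hi0 Hi1) Hcomm2).
  apply (bump_orbitals_structure f0 f1 (inv f0) (inv f1)); auto.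
  apply commute_conj_pow; auto. intros t. symmetry. apply C2.
Qed.
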